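(* If a spherical curve $P$ has a trigon of type B, then $r(P)\le 3$.
   Context: A spherical curve is a smooth immersion $P:S^1\to S^2$ whose self-intersections are finitely many transverse double points, called crossings. It is oriented and has at least one crossing. Regions are the components of $S^2\setminus P(S^1)$, and edges are the arcs of the curve between consecutive crossings. A trigon is a region bounded by three edges. The Gauss word is the cyclic word of crossings met in one traversal of the curve; each crossing appears twice. Crossings $a,b$ are interlaced if their occurrences alternate $a\dots b\dots a\dots b$ in the cyclic word, i.e., their chords cross in the chord diagram. Let a trigon have crossings $x,y,z$. Each of its three edges gives a block of two consecutive letters in the Gauss word, one block on each of $\{x,y\}$, $\{y,z\}$, $\{z,x\}$, so the word has the form $B_1W_1B_2W_2B_3W_3$ with the $W_i$ free of $x,y,z$. The trigon's type is determined by how many of the three pairs among $x,y,z$ are interlaced: type A if exactly two pairs are interlaced; type B if exactly one; type C if all three (e.g. $xy\,W_1\,zx\,W_2\,yz\,W_3$, as in the trefoil curve); type D if none (e.g. $xy\,W_1\,yz\,W_2\,zx\,W_3$). A crossing is reducible if no crossing is interlaced with it; equivalently, only three distinct regions meet at it. $P$ is reducible if it has a reducible crossing. The inverse-half-twisted splice $I$ at a crossing $p$ takes the curve with cyclic Gauss word $p\,A\,p\,B$ to the curve with Gauss word $\overline{A}\,B$, where $\overline{A}$ is $A$ reversed. Geometrically, $p$ is smoothed in the unique way giving a single closed curve, and the result is re-oriented. The reductivity $r(P)$ is the minimal number of successive applications of $I$ needed to reach a reducible spherical curve; $r(P)=0$ if $P$ is reducible. *)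

From HB Require Import structures.
From mathcomp Require Import all_boot all_fingroup.
Unset Printing Implicit Defensive.

Definition gauss_word (w : seq nat) : Prop :=
  w != [::] /\ forall x, x \in w -> count_mem x w = 2.

(** Darts (half-edges) of the curve with Gauss word w.  Position i of the
    word is a passage through crossing [nth 0 w i]; edge e_i goes from
    position i to position i+1 (cyclically).  Dart (i, true) is the start of
    e_i at position i, dart (i, false) is the end of e_(i-1) at position i. *)
Definition dart (L : nat) : finType := ('I_L * bool)%type.

Definition crossing_of (w : seq nat) (d : dart (size w)) : nat := nth 0 w d.1.

Definition edge_inv (L : nat) (d : dart L) : dart L :=
  if d.2 then (ordS d.1, false) else (ord_pred d.1, true).

(** A rotation system making every crossing transverse: sigma permutes the
    four darts at each crossing cyclically, and two steps of the rotation
    lead from one half of a strand to the other half of the same strand. *)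
Definition transverse_rotation (w : seq nat) (sigma : {perm dart (size w)}) : Prop :=
  (forall d, crossing_of w (sigma d) = crossing_of w d) /\
  (forall d, sigma (sigma d) = (d.1, ~~ d.2)).

(** Face permutation; its orbits are the boundary walks of the regions. *)
Definition face_perm (w : seq nat) (sigma : {perm dart (size w)})
  (d : dart (size w)) : dart (size w) := sigma (edge_inv (size w) d).

Definition num_regions (w : seq nat) (sigma : {perm dart (size w)}) : nat :=
  fcard (face_perm w sigma) (predT : {pred dart (size w)}).

(** A spherical curve (up to homeomorphism of S^2): a Gauss word together
    with a transverse rotation system of genus 0, i.e. V - E + F = 2, where
    V = n, E = 2n, n = size w / 2. *)
Definition spherical_curve (w : seq nat) (sigma : {perm dart (size w)}) : Prop :=
  gauss_word w /\ transverse_rotation w sigma /\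
  num_regions w sigma = (size w %/ 2 + 2)%N.

Definition between (w : seq nat) (a : nat) : seq nat :=
  let r := drop (index a w).+1 w in take (index a r) r.

Definition interlaced (w : seq nat) (a b : nat) : bool :=
  (a != b) && odd (count_mem b (between w a)).

(** Trigon of type B: a region bounded by three edges with three distinct
    crossings x, y, z, exactly one pair of which is interlaced. *)
Definition has_trigon_B (w : seq nat) (sigma : {perm dart (size w)}) : Prop :=
  exists d : dart (size w),
    let phi := face_perm w sigma in
    let x := crossing_of w d in
    let y := crossing_of w (phi d) in
    let z := crossing_of w (phi (phi d)) in
    [/\ phi (phi (phi d)) = d, x != y, y != z, z != x &
        (interlaced w x y + interlaced w y z + interlaced w z x)%N = 1%N].

Definition reducible_crossing (w : seq nat) (p : nat) : Prop :=
  p \in w /\ forall q, ~~ interlaced w p q.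

Definition reducible (w : seq nat) : Prop := exists p, reducible_crossing w p.

(** Inverse-half-twisted splice at p:  p A p B  |->  rev A ++ B
    (w is read cyclically starting at the first occurrence of p). *)
Definition splice (w : seq nat) (p : nat) : seq nat :=
  let r := drop (index p w).+1 w ++ take (index p w) w in
  rev (take (index p r) r) ++ drop (index p r).+1 r.

(** [reductivity_le w k] : r(P) <= k, i.e. some sequence of at most k
    successive splices at crossings reaches a reducible curve. *)
Fixpoint reductivity_le (w : seq nat) (k : nat) : Prop :=
  reducible w \/
  match k with
  | 0 => False
  | k'.+1 => exists p, p \in w /\ reductivity_le (splice w p) k'
  end.

From mathcomp Require Import all_boot all_fingroup.
From mathcomp Require Import zify.

(** Write I(p, q) for "crossings p and q are interlaced" in the Gauss word w.
  The proof is purely combinatorial and has two halves.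

  - Splices.  The parity of I(q, r) is the parity of the number of pairs of
    positions carrying (q, r) in this order.  Counting such pairs shows how an
    inverse-half-twisted splice at p acts on the interlacing relation:
    I'(q, r) = I(q, r) + I(p, q) I(p, r) (mod 2).
  - Trigons.  Let x, y, z be the crossings of a trigon.  For any other
    crossing u, I(x, u) + I(y, u) + I(z, u) = 0 (mod 2): each I(v, u) is the
    change of parity of the number of u's read between the two passages
    through v, and walking once around the trigon boundary returns to the
    starting parity.

  For a trigon of type B, name the crossings a, b, c with I(a, b) and c
  interlaced with neither a nor b; then I(c, .) = I(a, .) + I(b, .).  Either c
  is already reducible, or c is interlaced with some u, and the splice formula
  shows that after splicing at a, u and b the crossing c becomes reducible. *)

Fixpoint pair_count (q r : nat) (s : seq nat) : nat :=
  if s is x :: s' then (x == q) * count_mem r s' + pair_count q r s' else 0.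

Lemma pair_count_cat (q r : nat) (s t : seq nat) :
  pair_count q r (s ++ t) =
  pair_count q r s + pair_count q r t + count_mem q s * count_mem r t.
Proof.
elim: s => [|x s IH] /=; first by rewrite add0n addn0.
by rewrite IH count_cat; case: (x == q) => /=; lia.
Qed.

Lemma pair_count_notin (q r : nat) (s : seq nat) : q \notin s -> pair_count q r s = 0.
Proof.
elim: s => [|x s IH] //=; rewrite in_cons negb_or => /andP [qx qs].
by rewrite IH // eq_sym (negbTE qx).
Qed.

Lemma pair_count_rev (q r : nat) (s : seq nat) : q != r ->
  pair_count q r (rev s) + pair_count q r s = count_mem q s * count_mem r s.
Proof.
move=> qr; elim: s => [|x s IH] //=.
rewrite rev_cons -cats1 pair_count_cat /= count_rev.
case: (eqVneq x q) => [->|xq]; first rewrite (negbTE qr).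
all: rewrite /= ?mulnDl ?mulnDr ?mul0n ?mul1n ?muln0 ?muln1 ?addn0 ?add0n.
- by rewrite addnCA IH.
- by rewrite addnAC IH addnC.
Qed.

Lemma pair_count_swap (q r : nat) (s : seq nat) : q != r ->
  pair_count q r s + pair_count r q s = count_mem q s * count_mem r s.
Proof.
move=> qr; elim: s => [|x s IH] //=.
case: (eqVneq x q) => [->|xq]; first rewrite (negbTE qr).
all: rewrite /= ?mulnDl ?mulnDr ?mul0n ?mul1n ?muln0 ?muln1 ?addn0 ?add0n.
- by rewrite -addnA IH.
- by rewrite addnCA IH mulnC.
Qed.

(** The letter condition of a Gauss word, which is all the splice algebra uses. *)
Definition doubled (w : seq nat) : Prop := forall x, x \in w -> count_mem x w = 2.

Lemma split_first (a : nat) (w : seq nat) : a \in w ->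
  w = take (index a w) w ++ a :: drop (index a w).+1 w /\ a \notin take (index a w) w.
Proof.
move=> aw; split; last by rewrite in_take // ltnn.
by rewrite -{1}(cat_take_drop (index a w) w) (drop_nth 0) ?index_mem // nth_index.
Qed.

Lemma split_twice (a : nat) (w : seq nat) : count_mem a w = 2 ->
  exists s1 s2 s3, w = s1 ++ a :: s2 ++ a :: s3 /\
    [/\ a \notin s1, a \notin s2 & a \notin s3].
Proof.
move=> ca2; have aw : a \in w by rewrite -has_pred1 has_count ca2.
have [ew a_s1] := split_first _ _ aw; move: ca2; rewrite ew.
move: (take _ w) (drop _ w) a_s1 => s1 t a_s1.
rewrite count_cat /= eqxx (count_memPn a_s1) => -[]; rewrite add0n => ca1.
have at' : a \in t by rewrite -has_pred1 has_count ca1.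
have [et a_s2] := split_first _ _ at'; move: ca1; rewrite et.
move: (take _ t) (drop _ t) a_s2 => s2 s3 a_s2.
rewrite count_cat /= eqxx (count_memPn a_s2) => -[]; rewrite add0n => /count_memPn a_s3.
by exists s1, s2, s3.
Qed.

Lemma index_cat_notin (a : nat) (s t : seq nat) :
  a \notin s -> index a (s ++ a :: t) = size s.
Proof. by move=> a_s; rewrite index_cat (negbTE a_s) /= eqxx addn0. Qed.

Lemma drop_size_cons (s t : seq nat) (x : nat) : drop (size s).+1 (s ++ x :: t) = t.
Proof. by rewrite drop_cat ltnNge leqnSn /= subSn // subnn drop1. Qed.

Lemma between_split (a : nat) (s1 s2 s3 : seq nat) : a \notin s1 -> a \notin s2 ->
  between (s1 ++ a :: s2 ++ a :: s3) a = s2.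
Proof.
move=> a_s1 a_s2.
by rewrite /between index_cat_notin // drop_size_cons index_cat_notin // take_size_cat.
Qed.

Lemma splice_split (p : nat) (s1 s2 s3 : seq nat) : p \notin s1 -> p \notin s2 ->
  splice (s1 ++ p :: s2 ++ p :: s3) p = rev s2 ++ s3 ++ s1.
Proof.
move=> p_s1 p_s2; rewrite /splice index_cat_notin // drop_size_cons.
rewrite (take_size_cat _ (erefl (size s1))) -catA /= index_cat_notin //.
by rewrite (take_size_cat _ (erefl (size s2))) drop_size_cons.
Qed.

Lemma interlaced_pair_count (w : seq nat) (q r : nat) : q != r -> count_mem q w = 2 ->
  interlaced w q r = odd (pair_count q r w).
Proof.
move=> qr /split_twice [s1 [s2 [s3 [-> [q_s1 q_s2 q_s3]]]]].
rewrite /interlaced between_split // qr /= !pair_count_cat /= pair_count_cat /=.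
rewrite !pair_count_notin // (count_memPn q_s1) (count_memPn q_s2) eqxx.
rewrite !count_cat /= (negbTE qr) !oddD !oddM /=.
by case: (odd _); case: (odd _).
Qed.

Lemma interlaced_meml {w : seq nat} {a b : nat} : interlaced w a b -> a \in w.
Proof.
apply: contraTT => a_w; rewrite /interlaced /between (memNindex a_w).
by rewrite (drop_oversize (leqnSn _)) /=; case: (a != b).
Qed.

Lemma interlaced_memr {w : seq nat} {a b : nat} : interlaced w a b -> b \in w.
Proof.
by case/andP=> _ /odd_gt0; rewrite -has_count has_pred1 => /mem_take /mem_drop.
Qed.

Lemma interlacedxx (w : seq nat) (a : nat) : interlaced w a a = false.
Proof. by rewrite /interlaced eqxx. Qed.

(** Interlacing is symmetric: for letters outside w both sides vanish, and
    otherwise the two pair counts add up to 2 * 2. *)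
Lemma interlacedC (w : seq nat) (a b : nat) : doubled w ->
  interlaced w a b = interlaced w b a.
Proof.
move=> dw; have [/andP [aw bw]|out] := boolP ((a \in w) && (b \in w)); last first.
  by apply/idP/idP => I; case/negP: out; rewrite (interlaced_meml I) (interlaced_memr I).
case: (eqVneq a b) => [-> //|ab].
rewrite !interlaced_pair_count ?dw // 1?eq_sym //.
have := congr1 odd (pair_count_swap _ _ w ab); rewrite !dw // oddD /=.
by case: (odd _); case: (odd _).
Qed.

Lemma count_splice (w : seq nat) (p q : nat) : count_mem p w = 2 ->
  count_mem q (splice w p) = if q == p then 0 else count_mem q w.
Proof.
case/split_twice=> [s1 [s2 [s3 [-> [p_s1 p_s2 p_s3]]]]].
rewrite splice_split // !count_cat /= count_rev.
case: (eqVneq q p) => [->|qp]; first by rewrite !(count_memPn _).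
by rewrite count_cat /= eq_sym (negbTE qp); lia.
Qed.

Lemma mem_splice (w : seq nat) (p q : nat) : count_mem p w = 2 ->
  (q \in splice w p) = (q != p) && (q \in w).
Proof.
move/(count_splice w p q); rewrite -!has_pred1 !has_count.
by case: (eqVneq q p) => [_|qp] ->.
Qed.

Lemma doubled_splice (w : seq nat) (p : nat) : doubled w -> p \in w ->
  doubled (splice w p).
Proof.
move=> dw pw q; rewrite mem_splice ?dw // => /andP [qp qw].
by rewrite count_splice ?dw // (negbTE qp).
Qed.

Lemma interlaced_splice (w : seq nat) (p q r : nat) : doubled w -> p \in w ->
  q != p -> r != p -> q != r ->
  interlaced (splice w p) q r =
  interlaced w q r (+) (interlaced w p q && interlaced w p r).
Proof.
move=> dw pw qp rp qr; have cp := dw p pw.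
(* Letters outside w are interlaced with nothing, before or after the splice. *)
have [qw|q_w] := boolP (q \in w); last first.
  have q_s : q \notin splice w p by rewrite mem_splice // negb_and q_w orbT.
  by rewrite (contraNF interlaced_meml q_s) (contraNF interlaced_meml q_w)
             (contraNF interlaced_memr q_w).
have [rw|r_w] := boolP (r \in w); last first.
  have r_s : r \notin splice w p by rewrite mem_splice // negb_and r_w orbT.
  by rewrite (contraNF interlaced_memr r_s) (contraNF (@interlaced_memr w q r) r_w)
             (contraNF (@interlaced_memr w p r) r_w) andbF.
have cq' : count_mem q (splice w p) = 2 by rewrite count_splice // (negbTE qp) dw.
rewrite (interlaced_pair_count _ _ _ qr cq') (interlaced_pair_count _ _ _ qr (dw q qw)).
move: (dw q qw) (dw r rw).
case/split_twice: cp => [s1 [s2 [s3 [-> [p_s1 p_s2 p_s3]]]]].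
rewrite splice_split // /interlaced !between_split // eq_sym qp eq_sym rp /=.
rewrite !pair_count_cat /= pair_count_cat /= !count_cat /= count_rev.
rewrite !(eq_sym p) (negbTE qp) (negbTE rp) /=.
move=> /(congr1 odd) cq /(congr1 odd) cr.
have Nr := congr1 odd (pair_count_rev _ _ s2 qr).
rewrite !count_cat /= ?(eq_sym p) ?(negbTE qp) ?(negbTE rp) ?add0n in cq cr *.
do 2 rewrite /= ?oddD ?oddM in cq cr Nr *.
move: cq cr Nr.
move: (odd (count_mem q s1)) (odd (count_mem q s2)) (odd (count_mem q s3)).
move: (odd (count_mem r s1)) (odd (count_mem r s2)) (odd (count_mem r s3)).
move: (odd (pair_count q r s1)) (odd (pair_count q r s2)).
move: (odd (pair_count q r s3)) (odd (pair_count q r (rev s2))).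
by do 10! case.
Qed.

(** ** Three splices that make a crossing reducible *)

Definition trigon_relation (w : seq nat) (x y z : nat) : Prop :=
  forall u, u != x -> u != y -> u != z ->
    interlaced w x u (+) interlaced w y u (+) interlaced w z u = false.

Lemma trigon_relation_rot {w : seq nat} {x y z : nat} :
  trigon_relation w x y z -> trigon_relation w y z x.
Proof.
move=> rel u uy uz ux; have := rel u ux uy uz.
by case: (interlaced w x u); case: (interlaced w y u); case: (interlaced w z u).
Qed.

Section ThreeSplices.

Variables (w : seq nat) (a b c u : nat).
Hypotheses (dw : doubled w) (rel : trigon_relation w a b c).
Hypotheses (ac : a != c) (bc : b != c) (ua : u != a) (ub : u != b) (uc : u != c).
Hypotheses (Iab : interlaced w a b) (Iac : ~~ interlaced w a c)
           (Ibc : ~~ interlaced w b c) (Icu : interlaced w c u).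

Local Notation w1 := (splice w a).
Local Notation w2 := (splice w1 u).
Local Notation w3 := (splice w2 b).

Let Iau_Ibu : interlaced w a u (+) interlaced w b u.
Proof.
by move: (rel u ua ub uc); rewrite Icu; case: (interlaced w a u); case: (interlaced w b u).
Qed.

(* Each splice is performed at a letter of the current doubled word. *)
Let aw : a \in w. Proof. exact: interlaced_meml Iab. Qed.
Let ab : a != b. Proof. by case/andP: Iab. Qed.
Let d1 : doubled w1. Proof. exact: doubled_splice. Qed.
Let uw1 : u \in w1. Proof. by rewrite mem_splice ?dw // ua (interlaced_memr Icu). Qed.
Let d2 : doubled w2. Proof. exact: doubled_splice. Qed.
Let bw2 : b \in w2.
Proof. by rewrite !mem_splice ?dw ?d1 // eq_sym ub eq_sym ab (interlaced_memr Iab). Qed.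

Let mem_w3 (q : nat) : (q \in w3) = [&& q != b, q != u, q != a & q \in w].
Proof. by rewrite !mem_splice ?dw ?d1 ?d2. Qed.

Lemma interlaced_three_splices (q : nat) :
  q != a -> q != u -> q != b -> q != c ->
  interlaced w3 c q = interlaced w a q (+) interlaced w b q (+) interlaced w c q.
Proof.
move=> qa qu qb qc.
have [ca cb cu cq] : [/\ c != a, c != b, c != u & c != q] by rewrite !(eq_sym c).
have [ba bu bq] : [/\ b != a, b != u & b != q] by rewrite !(eq_sym b).
(* Each later splice point is interlaced with the row it modifies. *)
have Iuc1 : interlaced w1 u c.
  by rewrite interlaced_splice // interlacedC // Icu (negbTE Iac) andbF.
have Iub1 : interlaced w1 u b.
  by rewrite interlaced_splice // Iab andbT (interlacedC w u b) // addbC.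
have Ibc2 : interlaced w2 b c.
  rewrite (interlaced_splice w1 u b c) // Iuc1 Iub1 (interlaced_splice w a b c) //.
  by rewrite (negbTE Ibc) (negbTE Iac) andbF.
rewrite (interlaced_splice w2 b c q) // Ibc2 (interlaced_splice w1 u c q) //.
rewrite (interlaced_splice w1 u b q) // Iuc1 Iub1 (interlaced_splice w a c q) //.
rewrite (interlaced_splice w a b q) // (negbTE Iac) Iab /=.
by case: (interlaced w a q); case: (interlaced w b q); case: (interlaced w c q);
   case: (interlaced w1 u q).
Qed.

(** Hence c is reducible in the curve obtained by splicing at a, u, b. *)
Lemma reductivity_three_splices : c \in w -> reductivity_le w 3.
Proof.
move=> cw; right; exists a; split=> //; right; exists u; split=> //.
right; exists b; split=> //; left; exists c.
split=> [|q]; first by rewrite mem_w3 eq_sym bc eq_sym uc eq_sym ac.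
apply/negP=> Icq; have qc : q != c by rewrite eq_sym; case/andP: Icq.
move: (interlaced_memr Icq); rewrite mem_w3 => /and4P [qb qu qa _].
by move: Icq; rewrite interlaced_three_splices // rel.
Qed.

End ThreeSplices.

(** If a and b are interlaced, c is interlaced with neither, and the trigon
    relation holds, then r <= 3: either c is already reducible, or it is
    interlaced with some u and three splices make it reducible. *)
Lemma three_splice_reduction {w : seq nat} {a b c : nat} : doubled w -> c \in w ->
  a != c -> b != c -> trigon_relation w a b c ->
  interlaced w a b -> ~~ interlaced w a c -> ~~ interlaced w b c ->
  reductivity_le w 3.
Proof.
move=> dw cw ac bc rel Iab Iac Ibc.
have [/hasP [u _ Icu] | /hasPn isolated] := boolP (has (interlaced w c) w); last first.
  left; exists c; split=> // q; apply/negP=> Icq.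
  by have := isolated q (interlaced_memr Icq); rewrite Icq.
have uc : u != c by apply: contraTneq Icu => ->; rewrite interlacedxx.
have ua : u != a by apply: contraTneq Icu => ->; rewrite interlacedC.
have ub : u != b by apply: contraTneq Icu => ->; rewrite interlacedC.
exact: (reductivity_three_splices _ _ _ _ _ dw rel ac bc ua ub uc Iab Iac Ibc Icu cw).
Qed.

Lemma trigon_B_reduction {w : seq nat} {x y z : nat} : doubled w ->
  x \in w -> y \in w -> z \in w -> x != y -> y != z -> z != x ->
  trigon_relation w x y z ->
  (interlaced w x y + interlaced w y z + interlaced w z x)%N = 1%N ->
  reductivity_le w 3.
Proof.
move=> dw xw yw zw xy yz zx rel; have IC a b := interlacedC w a b dw.
case Ixy: (interlaced w x y); case Iyz: (interlaced w y z);
  case Izx: (interlaced w z x) => // _.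
- apply: (three_splice_reduction dw zw _ yz rel Ixy).
  + by rewrite eq_sym.
  + by rewrite IC Izx.
  + by rewrite Iyz.
- apply: (three_splice_reduction dw xw _ zx (trigon_relation_rot rel) Iyz).
  + by rewrite eq_sym.
  + by rewrite IC Ixy.
  + by rewrite Izx.
- have rel' := trigon_relation_rot (trigon_relation_rot rel).
  apply: (three_splice_reduction dw yw _ xy rel' Izx).
  + by rewrite eq_sym.
  + by rewrite IC Iyz.
  + by rewrite Ixy.
Qed.

(** ** The trigon relation from the rotation system *)

(** The rotation never maps a dart to the other dart at the same position:
    it always moves to the other passage through the crossing. *)
Lemma rotation_other_passage (w : seq nat) (sigma : {perm dart (size w)}) :
  transverse_rotation w sigma -> forall d, (sigma d).1 != d.1.
Proof.
move=> [_ sigma2] [i b]; apply/eqP=> /= same.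
have [c Ec] : exists c, sigma (i, b) = (i, c).
  by move: same; case: (sigma (i, b)) => j c /= ->; exists c.
have := sigma2 (i, b); rewrite Ec; clear same.
case: b c Ec => [] [] Ec //=; rewrite ?Ec; try by case.
all: by move=> E; have [] := perm_inj (etrans E (esym Ec)).
Qed.

Lemma position_of_twice (a : nat) (s1 s2 s3 : seq nat) (i : nat) :
  a \notin s1 -> a \notin s2 -> a \notin s3 ->
  i < size (s1 ++ a :: s2 ++ a :: s3) -> nth 0 (s1 ++ a :: s2 ++ a :: s3) i = a ->
  i = size s1 \/ i = size s1 + (size s2).+1.
Proof.
move=> a_s1 a_s2 a_s3; rewrite !size_cat /= size_cat nth_cat.
have [lt1 _ ai|ge1 lti] := ltnP i (size s1); first by rewrite -ai mem_nth in a_s1.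
case Ei: (i - size s1) => [|k] /=; first by left; lia.
rewrite nth_cat; have [lt2 ai|ge2] := ltnP k (size s2); first by rewrite -ai mem_nth in a_s2.
case Ek: (k - size s2) => [|k'] /= ai; first by right; lia.
have lt3 : k' < size s3 by move: lti => /=; lia.
by rewrite -ai mem_nth in a_s3.
Qed.

Definition prefix_parity (w : seq nat) (u i : nat) : bool := odd (count_mem u (take i w)).

Lemma interlaced_prefix_parity (w : seq nat) (a u i j : nat) :
  count_mem a w = 2 -> a != u -> i != j -> i < size w -> j < size w ->
  nth 0 w i = a -> nth 0 w j = a ->
  interlaced w a u = prefix_parity w u i (+) prefix_parity w u j.
Proof.
case/split_twice=> [s1 [s2 [s3 [-> [a_s1 a_s2 a_s3]]]]] au ij ilt jlt ai aj.
have at_first : prefix_parity (s1 ++ a :: s2 ++ a :: s3) u (size s1) = odd (count_mem u s1).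
  by rewrite /prefix_parity take_size_cat.
have at_second : prefix_parity (s1 ++ a :: s2 ++ a :: s3) u (size s1 + (size s2).+1) =
                 odd (count_mem u s1) (+) odd (count_mem u s2).
  rewrite /prefix_parity (catA s1 (a :: s2)) take_size_cat ?size_cat //.
  by rewrite count_cat /= (negbTE au) oddD.
rewrite /interlaced between_split // au /=.
have [Ei|Ei] := position_of_twice _ _ _ _ _ a_s1 a_s2 a_s3 ilt ai;
have [Ej|Ej] := position_of_twice _ _ _ _ _ a_s1 a_s2 a_s3 jlt aj;
  subst i j; rewrite ?eqxx // in ij; rewrite at_first at_second;
  by case: (odd (count_mem u s1)); case: (odd (count_mem u s2)).
Qed.

Lemma doubled_count_even (w : seq nat) (u : nat) : doubled w -> ~~ odd (count_mem u w).
Proof.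
move=> dw; have [/dw -> //|u_w] := boolP (u \in w).
by rewrite (count_memPn u_w).
Qed.

Lemma prefix_parity_ordS (w : seq nat) (u : nat) (m : 'I_(size w)) :
  ~~ odd (count_mem u w) -> nth 0 w m != u ->
  prefix_parity w u m = prefix_parity w u (ordS m).
Proof.
move=> even_u mu; have take_succ := take_nth 0 (ltn_ord m).
rewrite /prefix_parity /=; have [lt_succ|eq_succ] : m.+1 < size w \/ m.+1 = size w.
- by have := ltn_ord m; lia.
- by rewrite modn_small // take_succ -cats1 count_cat /= (negbTE mu) /= !addn0.
- rewrite eq_succ modnn take0 /=.
  move/(congr1 (count_mem u)): take_succ.
  rewrite eq_succ take_size -cats1 count_cat /= (negbTE mu) /= !addn0 => <-.
  exact/negbTE.
Qed.

Lemma prefix_parity_edge (w : seq nat) (u : nat) (d : dart (size w)) :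
  ~~ odd (count_mem u w) ->
  nth 0 w d.1 != u -> nth 0 w (edge_inv (size w) d).1 != u ->
  prefix_parity w u d.1 = prefix_parity w u (edge_inv (size w) d).1.
Proof.
move=> even_u; case: d => m [] /= mu pu; first exact: prefix_parity_ordS.
by rewrite -{1}(ord_predK m) -prefix_parity_ordS.
Qed.

Lemma face_step_interlaced (w : seq nat) (sigma : {perm dart (size w)})
    (d : dart (size w)) (u : nat) :
  doubled w -> transverse_rotation w sigma ->
  u != crossing_of w d -> u != crossing_of w (face_perm w sigma d) ->
  interlaced w (crossing_of w (face_perm w sigma d)) u =
  prefix_parity w u d.1 (+) prefix_parity w u (face_perm w sigma d).1.
Proof.
move=> dw rot ud uphid; set phi := face_perm w sigma; have [same_crossing _] := rot.
set e := edge_inv (size w) d; have phid : phi d = sigma e by [].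
have cross_e : crossing_of w (phi d) = nth 0 w e.1 by rewrite phid same_crossing.
have two_passages : e.1 != (sigma e).1 :> nat.
  by rewrite eq_sym; apply: rotation_other_passage.
have ue : nth 0 w e.1 != u by rewrite -cross_e eq_sym.
rewrite cross_e (interlaced_prefix_parity _ _ _ _ _ _ _ two_passages) ?dw ?mem_nth //.
by rewrite (prefix_parity_edge w u d) ?(doubled_count_even w u dw) // eq_sym.
Qed.

(** Going around a trigon the parity changes telescope: the trigon relation. *)
Lemma trigon_parity {w : seq nat} {sigma : {perm dart (size w)}} (d : dart (size w)) :
  doubled w -> transverse_rotation w sigma ->
  let phi := face_perm w sigma in phi (phi (phi d)) = d ->
  trigon_relation w (crossing_of w d) (crossing_of w (phi d)) (crossing_of w (phi (phi d))).
Proof.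
move=> dw rot phi cycle3 u ux uy uz.
have step := face_step_interlaced _ _ _ u dw rot.
rewrite -{1}cycle3 !step -/phi ?cycle3 //.
by case: (prefix_parity w u d.1); case: (prefix_parity w u (phi d).1);
   case: (prefix_parity w u (phi (phi d)).1).
Qed.

Theorem mainTheorem5 (w : seq nat) (sigma : {perm dart (size w)}) :
  spherical_curve w sigma -> has_trigon_B w sigma -> reductivity_le w 3.
Proof.
move=> [[_ dw] [rot _]] [d /= [cycle3 xy yz zx typeB]].
apply: (trigon_B_reduction dw _ _ _ xy yz zx (trigon_parity d dw rot cycle3) typeB);
  exact: mem_nth.
Qed.
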